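(* Let $q$ be a complex number with $|q|<1$. Then \[ \sum_{n\geq 0} q^{2n} (q^{4n+4};q^4)_\infty (q;q)_{2n+1} = \frac{2(1-q)(q^4;q^4)_\infty}{1+q^3}- \frac{(q;q)_\infty}{1+q^3}, \] and \[ (1+q^3) \sum_{n\geq 0} \frac{(-q^2;q^2)_n\, q^{4n+2}}{(q;q^2)_{n+1}} = \frac{(q^4;q^4)_\infty}{(q^2;q)_\infty}-1 . \]
   Context: For a complex number $a$ and $|q|<1$: $(a;q)_0=1$, $(a;q)_n=\prod_{j=0}^{n-1}(1-aq^j)$ for integers $n\ge 1$, and $(a;q)_\infty=\prod_{j=0}^{\infty}(1-aq^j)$. *)

From Stdlib Require Import Reals ClassicalEpsilon.
From Coquelicot Require Import Coquelicot.
Open Scope C_scope.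

Fixpoint qpoch (a q : C) (n : nat) : C :=
  match n with
  | O => 1
  | S m => qpoch a q m * (1 - a * q ^ m)
  end.

(* infinite q-Pochhammer symbol: the limit of the partial products
   (a;q)_n as n -> oo (chosen by epsilon; it is the limit whenever it exists) *)
Definition qpoch_inf (a q : C) : C :=
  epsilon (inhabits (RtoC 0))
    (fun l => filterlim (qpoch a q) eventually (locally l)).

From Stdlib Require Import Reals Lra Lia ClassicalEpsilon.
From Coquelicot Require Import Coquelicot.
Open Scope C_scope.

(* Both identities telescope.  Write X = q^(2n) and T_n = (q^(4n+4);q^4)_oo.  Then
   Phi_n = (q;q)_(2n) T_n (1 + (1-q) X - q X^2) satisfies (1+q^3) a_n = Phi_n - Phi_(n+1) for
   the n-th term a_n of the first series, and W_n = (1 - q + q X) (-q^2;q^2)_n / (q;q^2)_n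
   satisfies (1+q^3) b_n = W_(n+1) - W_n for the n-th term b_n of the second one.  Since
   Phi_0 = 2(1-q)(q^4;q^4)_oo and W_0 = 1, it remains to compute the limits: Phi_n -> (q;q)_oo
   because T_n -> 1, and W_n -> (q^4;q^4)_oo / (q^2;q)_oo by the product identities
   (-a;q)_n (a;q)_n = (a^2;q^2)_n and (a;q^2)_n (aq;q^2)_n = (a;q)_(2n).
   The analytic input is the bound |(b;q)_n - 1| <= exp(|b|/(1-|q|)) - 1: it makes the
   increments of (b;q)_n geometrically small, so the product converges; it gives
   (b;q)_oo -> 1 as b -> 0; and through (a;q)_oo = (a;q)_N (a q^N;q)_oo it shows that
   (a;q)_oo <> 0 for |a| < 1. *)

Local Notation "u --> l" := (filterlim u eventually (locally (l : C))) (at level 70).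

Lemma one_sub_neq0 (z : C) : (Cmod z < 1)%R -> 1 - z <> 0.
Proof.
  intros Hz E. replace z with (RtoC 1) in Hz by (rewrite <- (Cplus_0_l z), <- E; ring).
  rewrite Cmod_1 in Hz; lra.
Qed.

Lemma one_add_neq0 (z : C) : (Cmod z < 1)%R -> 1 + z <> 0.
Proof.
  intros Hz; replace (1 + z) with (1 - - z) by ring.
  apply one_sub_neq0; now rewrite Cmod_opp.
Qed.

Lemma Cmod_pow_lt1 (q : C) (k : nat) : (Cmod q < 1)%R -> (0 < k)%nat -> (Cmod (q ^ k) < 1)%R.
Proof.
  intros Hq Hk; rewrite Cmod_pow.
  apply pow_lt_1_compat; [split; [apply Cmod_ge_0 | exact Hq] | exact Hk].
Qed.

Lemma Cmod_mul_pow_le (a q : C) (n : nat) : (Cmod q <= 1)%R -> (Cmod (a * q ^ n) <= Cmod a)%R.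
Proof.
  intros Hq. rewrite Cmod_mult, Cmod_pow.
  assert (Cmod q ^ n <= 1)%R
    by (rewrite <- (pow1 n); apply pow_incr; split; [apply Cmod_ge_0 | exact Hq]).
  pose proof (Cmod_ge_0 a). nra.
Qed.

Lemma lim_Cplus (u v : nat -> C) (l m : C) :
  u --> l -> v --> m -> (fun n => u n + v n) --> l + m.
Proof.
  intros Hu Hv; exact (filterlim_comp_2 _ _ _ Hu Hv (filterlim_plus (V := C_NormedModule) l m)).
Qed.

Lemma lim_Copp (u : nat -> C) (l : C) : u --> l -> (fun n => - u n) --> - l.
Proof.
  intros Hu; exact (filterlim_comp _ _ _ _ _ _ _ _ Hu (filterlim_opp (V := C_NormedModule) l)).
Qed.

Lemma lim_Cminus (u v : nat -> C) (l m : C) :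
  u --> l -> v --> m -> (fun n => u n - v n) --> l - m.
Proof. intros Hu Hv; apply lim_Cplus, lim_Copp; assumption. Qed.

(* [C] carries Coquelicot's product uniform structure, whereas continuity of multiplication is
   stated for its absolute-ring structure; both are generated by [Cmod]. *)
Lemma lim_C_AbsRing (u : nat -> C) (l : C) :
  filterlim u eventually (@locally (AbsRing_UniformSpace C_AbsRing) l) <-> u --> l.
Proof.
  rewrite (filterlim_locally_ball_norm (U := AbsRing_NormedModule C_AbsRing)),
    (filterlim_locally_ball_norm (U := C_NormedModule)).
  reflexivity.
Qed.

Lemma lim_Cmult (u v : nat -> C) (l m : C) :
  u --> l -> v --> m -> (fun n => u n * v n) --> l * m.
Proof.
  intros Hu%lim_C_AbsRing Hv%lim_C_AbsRing; apply lim_C_AbsRing.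
  exact (filterlim_comp_2 _ _ _ Hu Hv (filterlim_mult (K := C_AbsRing) l m)).
Qed.

Lemma continuous_Cinv (l : C) : l <> 0 -> filterlim Cinv (locally l) (locally (/ l)).
Proof.
  intros Hl. apply (filterlim_locally_ball_norm (K := C_AbsRing) (U := C_NormedModule)).
  intros eps. assert (Hl0 : (0 < Cmod l)%R) by now apply Cmod_gt_0.
  (* |/z - /l| = |z - l| / (|z| |l|), and |z| >= |l| / 2 on the ball of radius d around l. *)
  set (d := Rmin (Cmod l / 2) (eps * Cmod l * Cmod l / 2)).
  assert (Hd : (0 < d)%R).
  { apply Rmin_pos; [lra|]. pose proof (cond_pos eps). apply Rdiv_lt_0_compat; [|lra].
    apply Rmult_lt_0_compat; [apply Rmult_lt_0_compat|]; lra. }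
  apply (filter_imp (ball_norm l (mkposreal d Hd)));
    [|exact (locally_ball_norm (V := C_NormedModule) l _)].
  unfold ball_norm; simpl; change norm with Cmod; change minus with Cminus.
  intros z Hz.
  assert (Hzl : (Cmod (z - l) < Cmod l / 2)%R) by (eapply Rlt_le_trans; [exact Hz | apply Rmin_l]).
  assert (Hlz : (Cmod l / 2 <= Cmod z)%R).
  { pose proof (Cmod_triangle z (l - z)) as Ht. replace (z + (l - z)) with l in Ht by ring.
    replace (l - z) with (- (z - l)) in Ht by ring. rewrite Cmod_opp in Ht. lra. }
  assert (Hz0 : z <> 0) by (intros ->; rewrite Cmod_0 in Hlz; lra).
  replace (/ z - / l) with (- (z - l) / (z * l)) by (field; auto).
  unfold Cdiv; rewrite Cmod_mult, Cmod_opp, Cmod_inv, Cmod_mult by (apply Cmult_neq_0; auto).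
  apply Rmult_lt_reg_r with (Cmod z * Cmod l)%R; [apply Rmult_lt_0_compat; lra|].
  rewrite Rmult_assoc, Rinv_l by (apply Rgt_not_eq, Rmult_lt_0_compat; lra).
  assert (Cmod (z - l) < eps * Cmod l * Cmod l / 2)%R
    by (eapply Rlt_le_trans; [exact Hz | apply Rmin_r]).
  assert (0 <= eps * Cmod l * (Cmod z - Cmod l / 2))%R
    by (pose proof (cond_pos eps); apply Rmult_le_pos; [apply Rmult_le_pos|]; lra).
  lra.
Qed.

Lemma lim_Cinv (u : nat -> C) (l : C) : u --> l -> l <> 0 -> (fun n => / u n) --> / l.
Proof. intros Hu Hl; exact (filterlim_comp _ _ _ _ _ _ _ _ Hu (continuous_Cinv l Hl)). Qed.

Lemma lim_Cdiv (u v : nat -> C) (l m : C) :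
  u --> l -> v --> m -> m <> 0 -> (fun n => u n / v n) --> l / m.
Proof. intros Hu Hv Hm; apply lim_Cmult, lim_Cinv; assumption. Qed.

Lemma lim_unique (u : nat -> C) (l m : C) : u --> l -> u --> m -> l = m.
Proof. intros Hl Hm; exact (filterlim_locally_unique (V := C_NormedModule) u l m Hl Hm). Qed.

Lemma lim_subseq (u : nat -> C) (l : C) (phi : nat -> nat) :
  (forall n, (phi n < phi (S n))%nat) -> u --> l -> (fun n => u (phi n)) --> l.
Proof. intros Hphi Hu; exact (filterlim_comp _ _ _ _ _ _ _ _ (eventually_subseq phi Hphi) Hu). Qed.

Lemma lim_shift_inv (u : nat -> C) (l : C) : (fun n => u (S n)) --> l -> u --> l.
Proof.
  intros Hu P HP. destruct (Hu P HP) as [N HN].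
  exists (S N); intros [|n] Hn; [lia | apply HN; lia].
Qed.

Lemma lim_Cmod_bound (u : nat -> C) (l : C) (r : nat -> R) :
  (forall n, Cmod (u n - l) <= r n)%R -> is_lim_seq r 0%R -> u --> l.
Proof.
  intros Hur Hr%is_lim_seq_spec.
  apply (filterlim_locally_ball_norm (U := C_NormedModule)); intros eps.
  destruct (Hr eps) as [N HN]; exists N; intros n Hn.
  unfold ball_norm; change (Cmod (u n - l) < eps)%R.
  specialize (HN n Hn); rewrite Rminus_0_r in HN.
  eapply Rle_lt_trans; [apply Hur | eapply Rle_lt_trans; [apply Rle_abs | exact HN]].
Qed.

Lemma lim_Cmod_le (u : nat -> C) (l c : C) (r : R) :
  u --> l -> (forall n, Cmod (u n - c) <= r)%R -> (Cmod (l - c) <= r)%R.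
Proof.
  intros Hu Hur.
  assert (Hn : is_lim_seq (fun n => Cmod (u n - c)) (Cmod (l - c))).
  { exact (filterlim_comp _ _ _ _ _ _ _ _ (lim_Cminus _ _ _ _ Hu (filterlim_const c))
            (filterlim_norm (V := C_NormedModule) (l - c))). }
  exact (is_lim_seq_le _ _ _ _ Hur Hn (is_lim_seq_const r)).
Qed.

Lemma lim_Cpow_0 (q : C) : (Cmod q < 1)%R -> (fun n => q ^ n) --> 0.
Proof.
  intros Hq. apply lim_Cmod_bound with (fun n => Cmod q ^ n)%R.
  - intros n; replace (q ^ n - 0) with (q ^ n) by ring; rewrite Cmod_pow; lra.
  - apply is_lim_seq_geom; rewrite Rabs_pos_eq by apply Cmod_ge_0; exact Hq.
Qed.

Lemma lim_Cpow_mul_0 (q : C) (k : nat) :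
  (Cmod q < 1)%R -> (0 < k)%nat -> (fun n => q ^ (k * n)) --> 0.
Proof.
  intros Hq Hk. apply (filterlim_ext (fun n => (q ^ k) ^ n)); [intros n; now rewrite Cpow_mult_r|].
  apply lim_Cpow_0, Cmod_pow_lt1; assumption.
Qed.

Lemma is_series_telescoping (c : C) (u F : nat -> C) (L : C) :
  c <> 0 -> (forall n, c * u n = F (S n) - F n) -> F --> L -> is_series u ((L - F 0%nat) / c).
Proof.
  intros Hc Hstep HF.
  assert (Hu : forall n, u n = (F (S n) - F n) / c)
    by (intros n; rewrite <- Hstep; field; exact Hc).
  assert (Hsum : forall n, (F (S n) - F 0%nat) / c = sum_n u n).
  { induction n as [|n IH]; [rewrite sum_O, Hu; reflexivity|].
    rewrite sum_Sn; change (plus (sum_n u n) (u (S n))) with (sum_n u n + u (S n)).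
    rewrite <- IH, Hu; field; exact Hc. }
  apply (filterlim_ext _ _ Hsum), lim_Cdiv; [|apply filterlim_const | exact Hc].
  apply lim_Cminus; [apply lim_subseq; [intros; lia | exact HF] | apply filterlim_const].
Qed.

Lemma qpoch_S (a q : C) (n : nat) : qpoch a q (S n) = qpoch a q n * (1 - a * q ^ n).
Proof. reflexivity. Qed.

Lemma qpoch_shift (a q : C) (n : nat) : qpoch a q (S n) = (1 - a) * qpoch (a * q) q n.
Proof.
  induction n as [|n IH]; [simpl; ring|].
  rewrite qpoch_S, IH, qpoch_S, Cpow_S; ring.
Qed.

Lemma qpoch_opp_mul (a q : C) (n : nat) :
  qpoch (- a) q n * qpoch a q n = qpoch (a ^ 2) (q ^ 2) n.
Proof.
  induction n as [|n IH]; [simpl; ring|].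
  rewrite !qpoch_S, <- IH, <- Cpow_mult_r, Nat.mul_comm, Cpow_mult_r; ring.
Qed.

Lemma qpoch_even_odd (a q : C) (n : nat) :
  qpoch a (q ^ 2) n * qpoch (a * q) (q ^ 2) n = qpoch a q (2 * n).
Proof.
  induction n as [|n IH]; [simpl; ring|].
  replace (2 * S n)%nat with (S (S (2 * n))) by lia.
  rewrite !qpoch_S, <- IH, (Cpow_S q (2 * n)), (Cpow_mult_r q 2 n); ring.
Qed.

Lemma qpoch_neq0 (a q : C) (n : nat) : (Cmod a < 1)%R -> (Cmod q <= 1)%R -> qpoch a q n <> 0.
Proof.
  intros Ha Hq. induction n as [|n IH]; [exact C1_nz|].
  rewrite qpoch_S; apply Cmult_neq_0; [exact IH|].
  apply one_sub_neq0; eapply Rle_lt_trans; [apply Cmod_mul_pow_le|]; lra.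
Qed.

Lemma Cmod_mul_one_sub_sub1 (p a : C) (s : R) :
  (Cmod (p - 1) <= exp s - 1)%R -> (Cmod (p * (1 - a) - 1) <= exp (s + Cmod a) - 1)%R.
Proof.
  intros Hp. rewrite exp_plus.
  replace (p * (1 - a) - 1) with ((p - 1) * (1 - a) + - a) by ring.
  eapply Rle_trans; [apply Cmod_triangle|]. rewrite Cmod_mult, Cmod_opp.
  assert (H1a : (Cmod (1 - a) <= 1 + Cmod a)%R).
  { unfold Cminus; eapply Rle_trans; [apply Cmod_triangle|]. rewrite Cmod_1, Cmod_opp; lra. }
  pose proof (exp_ineq1_le (Cmod a)). pose proof (exp_pos s).
  pose proof (Cmod_ge_0 (p - 1)). pose proof (Cmod_ge_0 (1 - a)).
  nra.
Qed.

Lemma qpoch_sub1_bound (b q : C) (n : nat) : (Cmod q < 1)%R ->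
  (Cmod (qpoch b q n - 1) <= exp (Cmod b / (1 - Cmod q)) - 1)%R.
Proof.
  intros Hq.
  assert (Hpartial : forall m,
    (Cmod (qpoch b q m - 1) <= exp (Cmod b * (1 - Cmod q ^ m) / (1 - Cmod q)) - 1)%R).
  { induction m as [|m IH].
    - replace (Cmod b * (1 - Cmod q ^ 0) / (1 - Cmod q))%R with 0%R by (simpl; field; lra).
      rewrite exp_0; simpl; replace (1 - 1) with (RtoC 0) by ring; rewrite Cmod_0; lra.
    - replace (Cmod b * (1 - Cmod q ^ S m) / (1 - Cmod q))%R
        with (Cmod b * (1 - Cmod q ^ m) / (1 - Cmod q) + Cmod (b * q ^ m))%R
        by (rewrite Cmod_mult, Cmod_pow; simpl; field; lra).
      apply Cmod_mul_one_sub_sub1, IH. }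
  eapply Rle_trans; [apply Hpartial|]. apply Rplus_le_compat_r.
  pose proof (Cmod_ge_0 b). assert (0 <= Cmod q ^ n)%R by (apply pow_le, Cmod_ge_0).
  assert (Hs : (Cmod b * (1 - Cmod q ^ n) / (1 - Cmod q) <= Cmod b / (1 - Cmod q))%R).
  { apply Rmult_le_compat_r; [apply Rlt_le, Rinv_0_lt_compat; lra | nra]. }
  destruct (Rle_lt_or_eq_dec _ _ Hs) as [Hlt | ->];
    [apply Rlt_le, exp_increasing, Hlt | apply Rle_refl].
Qed.

Lemma qpoch_cvg_ex (b q : C) : (Cmod q < 1)%R -> exists l, qpoch b q --> l.
Proof.
  intros Hq.
  set (d n := qpoch b q (S n) - qpoch b q n).
  set (M := exp (Cmod b / (1 - Cmod q))).
  assert (Hd : ex_series (V := C_CompleteNormedModule) d).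
  { apply ex_series_le with (fun n => M * Cmod b * Cmod q ^ n)%R.
    - intros n; change (Cmod (d n) <= M * Cmod b * Cmod q ^ n)%R.
      unfold d; rewrite qpoch_S.
      replace (qpoch b q n * (1 - b * q ^ n) - qpoch b q n)
        with (- (qpoch b q n * (b * q ^ n))) by ring.
      rewrite Cmod_opp, !Cmod_mult, Cmod_pow, Rmult_assoc.
      apply Rmult_le_compat_r; [apply Rmult_le_pos; [apply Cmod_ge_0 | apply pow_le, Cmod_ge_0]|].
      pose proof (qpoch_sub1_bound b q n Hq) as Hbound. fold M in Hbound.
      pose proof (Cmod_triangle (qpoch b q n - 1) 1) as Ht.
      replace (qpoch b q n - 1 + 1) with (qpoch b q n) in Ht by ring. rewrite Cmod_1 in Ht. lra.
    - apply (ex_series_scal_l (V := R_NormedModule)).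
      exists (/ (1 - Cmod q))%R; apply is_series_geom.
      rewrite Rabs_pos_eq by apply Cmod_ge_0; exact Hq. }
  destruct Hd as [L HL]. exists (L + 1).
  assert (Hsum : forall n, sum_n d n + 1 = qpoch b q (S n)).
  { induction n as [|n IH]; [rewrite sum_O; unfold d; simpl; ring|].
    rewrite sum_Sn; change (plus (sum_n d n) (d (S n))) with (sum_n d n + d (S n)).
    unfold d at 2; rewrite <- IH; ring. }
  apply lim_shift_inv, (filterlim_ext (fun n => sum_n d n + 1)); [exact Hsum|].
  apply lim_Cplus; [exact HL | apply filterlim_const].
Qed.

Lemma qpoch_cvg (b q : C) : (Cmod q < 1)%R -> qpoch b q --> qpoch_inf b q.
Proof.
  intros Hq; unfold qpoch_inf.
  apply (epsilon_spec (inhabits (RtoC 0)) (fun l => qpoch b q --> l)), qpoch_cvg_ex, Hq.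
Qed.

Lemma qpoch_inf_shift (a q : C) : (Cmod q < 1)%R -> qpoch_inf a q = (1 - a) * qpoch_inf (a * q) q.
Proof.
  intros Hq. apply (lim_unique (fun n => qpoch a q (S n))).
  - apply lim_subseq; [intros; lia | apply qpoch_cvg, Hq].
  - apply (filterlim_ext (fun n => (1 - a) * qpoch (a * q) q n));
      [intros; now rewrite qpoch_shift|].
    apply lim_Cmult; [apply filterlim_const | apply qpoch_cvg, Hq].
Qed.

Lemma qpoch_inf_split (a q : C) (n : nat) : (Cmod q < 1)%R ->
  qpoch_inf a q = qpoch a q n * qpoch_inf (a * q ^ n) q.
Proof.
  intros Hq. induction n as [|n IH]; [simpl; rewrite Cmult_1_r; ring|].
  rewrite IH, (qpoch_inf_shift (a * q ^ n)), qpoch_S, Cpow_S by exact Hq.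
  replace (a * q ^ n * q) with (a * (q * q ^ n)) by ring; ring.
Qed.

Lemma qpoch_inf_sub1_bound (b q : C) : (Cmod q < 1)%R ->
  (Cmod (qpoch_inf b q - 1) <= exp (Cmod b / (1 - Cmod q)) - 1)%R.
Proof.
  intros Hq; apply (lim_Cmod_le (qpoch b q));
    [apply qpoch_cvg, Hq | intros n; apply qpoch_sub1_bound, Hq].
Qed.

Lemma lim_qpoch_inf_1 (b : nat -> C) (q : C) : (Cmod q < 1)%R ->
  b --> 0 -> (fun n => qpoch_inf (b n) q) --> 1.
Proof.
  intros Hq Hb. apply lim_Cmod_bound with (fun n => exp (Cmod (b n) / (1 - Cmod q)) - 1)%R.
  - intros n; apply qpoch_inf_sub1_bound, Hq.
  - assert (Hb' : is_lim_seq (fun n => Cmod (b n)) 0%R).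
    { rewrite <- Cmod_0.
      exact (filterlim_comp _ _ _ _ _ _ _ _ Hb (filterlim_norm (V := C_NormedModule) (RtoC 0))). }
    pose proof (is_lim_seq_continuous (fun t => exp (t / (1 - Cmod q)) - 1)%R _ 0%R
                  ltac:(reg) Hb') as H.
    unfold Rdiv in H at 2; rewrite Rmult_0_l, exp_0, Rminus_diag in H. exact H.
Qed.

Lemma qpoch_inf_neq0 (a q : C) : (Cmod a < 1)%R -> (Cmod q < 1)%R -> qpoch_inf a q <> 0.
Proof.
  intros Ha Hq.
  assert (Htail : (fun n => qpoch_inf (a * q ^ n) q) --> 1).
  { apply lim_qpoch_inf_1; [exact Hq|]. rewrite <- (Cmult_0_r a).
    apply lim_Cmult; [apply filterlim_const | apply lim_Cpow_0, Hq]. }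
  destruct (proj1 (filterlim_locally_ball_norm (U := C_NormedModule) _ _) Htail posreal_one)
    as [N HN].
  specialize (HN N (le_n N)); unfold ball_norm in HN.
  change (Cmod (qpoch_inf (a * q ^ N) q - 1) < 1)%R in HN.
  rewrite (qpoch_inf_split a q N Hq). apply Cmult_neq_0; [apply qpoch_neq0; lra|].
  intros E; rewrite E in HN. replace (0 - 1) with (- (RtoC 1)) in HN by ring.
  rewrite Cmod_opp, Cmod_1 in HN; lra.
Qed.

Section FirstIdentity.

Variable q : C.
Hypothesis hq : (Cmod q < 1)%R.

Let T n := qpoch_inf (q ^ (4 * n + 4)) (q ^ 4).
Let Phi n := qpoch q q (2 * n) * T n * (1 + (1 - q) * q ^ (2 * n) - q * q ^ (2 * n) * q ^ (2 * n)).

Lemma T_step n : T n = (1 - q ^ 4 * q ^ (2 * n) * q ^ (2 * n)) * T (S n).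
Proof.
  unfold T. rewrite qpoch_inf_shift by (apply Cmod_pow_lt1; [exact hq | lia]).
  rewrite <- !Cpow_add_r. do 2 f_equal; f_equal; lia.
Qed.

Lemma Phi_step n :
  (1 + q ^ 3) * (q ^ (2 * n) * qpoch_inf (q ^ (4 * n + 4)) (q ^ 4) * qpoch q q (2 * n + 1))
  = Phi n - Phi (S n).
Proof.
  unfold Phi. fold (T n). rewrite (T_step n).
  replace (2 * n + 1)%nat with (S (2 * n)) by lia.
  replace (2 * S n)%nat with (S (S (2 * n))) by lia.
  rewrite !qpoch_S, !Cpow_S. ring.
Qed.

Lemma Phi_0 : Phi 0 = 2 * (1 - q) * qpoch_inf (q ^ 4) (q ^ 4).
Proof. unfold Phi, T; simpl; ring. Qed.

Lemma lim_Phi : Phi --> qpoch_inf q q.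
Proof.
  assert (HX : (fun n => q ^ (2 * n)) --> 0) by (apply lim_Cpow_mul_0; [exact hq | lia]).
  assert (HT : T --> 1).
  { apply lim_qpoch_inf_1; [apply Cmod_pow_lt1; [exact hq | lia]|].
    apply (filterlim_ext (fun n => q ^ 4 * q ^ (4 * n)));
      [intros n; now rewrite <- Cpow_add_r, Nat.add_comm|].
    rewrite <- (Cmult_0_r (q ^ 4)).
    apply lim_Cmult; [apply filterlim_const | apply lim_Cpow_mul_0; [exact hq | lia]]. }
  replace (qpoch_inf q q) with (qpoch_inf q q * 1 * (1 + (1 - q) * 0 - q * 0 * 0)) by ring.
  unfold Phi. apply lim_Cmult; [apply lim_Cmult; [|exact HT]|].
  - apply (lim_subseq (qpoch q q)); [intros; lia | apply qpoch_cvg, hq].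
  - apply lim_Cminus; [apply lim_Cplus | apply lim_Cmult; [apply lim_Cmult|]].
    + apply filterlim_const.
    + apply lim_Cmult; [apply filterlim_const | exact HX].
    + apply filterlim_const.
    + exact HX.
    + exact HX.
Qed.

Lemma first_identity :
  is_series (fun n => q ^ (2 * n) * qpoch_inf (q ^ (4 * n + 4)) (q ^ 4) * qpoch q q (2 * n + 1))
    (2 * (1 - q) * qpoch_inf (q ^ 4) (q ^ 4) / (1 + q ^ 3) - qpoch_inf q q / (1 + q ^ 3)).
Proof.
  assert (H3 : 1 + q ^ 3 <> 0) by (apply one_add_neq0, Cmod_pow_lt1; [exact hq | lia]).
  replace (2 * (1 - q) * qpoch_inf (q ^ 4) (q ^ 4) / (1 + q ^ 3) - qpoch_inf q q / (1 + q ^ 3))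
    with ((- qpoch_inf q q - - Phi 0) / (1 + q ^ 3)) by (rewrite Phi_0; field; exact H3).
  apply (is_series_telescoping _ _ (fun n => - Phi n)); [exact H3 | | apply lim_Copp, lim_Phi].
  intros n; rewrite Phi_step; ring.
Qed.

End FirstIdentity.

Section SecondIdentity.

Variable q : C.
Hypothesis hq : (Cmod q < 1)%R.

Let W n := (1 - q + q * q ^ (2 * n)) * qpoch (- q ^ 2) (q ^ 2) n / qpoch q (q ^ 2) n.

Lemma qpoch_q_q2_neq0 n : qpoch q (q ^ 2) n <> 0.
Proof. apply qpoch_neq0; [exact hq | apply Rlt_le, Cmod_pow_lt1; [exact hq | lia]]. Qed.

Lemma one_sub_q_pow_neq0 n : 1 - q * q ^ (2 * n) <> 0.
Proof. apply one_sub_neq0; rewrite <- Cpow_S; apply Cmod_pow_lt1; [exact hq | lia]. Qed.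

Lemma W_step n :
  (1 + q ^ 3) * (qpoch (- q ^ 2) (q ^ 2) n * q ^ (4 * n + 2) / qpoch q (q ^ 2) (n + 1))
  = W (S n) - W n.
Proof.
  pose proof (qpoch_q_q2_neq0 n). pose proof (one_sub_q_pow_neq0 n).
  unfold W. rewrite Nat.add_1_r, !qpoch_S, <- Cpow_mult_r.
  replace (q ^ (2 * S n)) with (q ^ 2 * q ^ (2 * n)) by (rewrite <- Cpow_add_r; f_equal; lia).
  replace (q ^ (4 * n + 2)) with (q ^ 2 * q ^ (2 * n) * q ^ (2 * n))
    by (rewrite <- !Cpow_add_r; f_equal; lia).
  field; auto.
Qed.

Lemma W_0 : W 0 = 1.
Proof. unfold W; simpl; field. Qed.

Lemma W_eq n :
  W n = (1 - q + q * q ^ (2 * n)) * (1 - q * q ^ (2 * n)) / (1 - q)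
        * (qpoch (q ^ 4) (q ^ 4) n / qpoch (q ^ 2) q (2 * n)).
Proof.
  assert (H1q : 1 - q <> 0) by (apply one_sub_neq0, hq).
  assert (Hq2 : (Cmod (q ^ 2) < 1)%R) by (apply Cmod_pow_lt1; [exact hq | lia]).
  assert (HG : qpoch (q ^ 2) (q ^ 2) n <> 0) by (apply qpoch_neq0; lra).
  pose proof (qpoch_q_q2_neq0 n). pose proof (one_sub_q_pow_neq0 n).
  (* (q^2;q)_(2n) = (q;q)_(2n+1) / (1-q), and (q;q)_(2n) splits into even and odd factors. *)
  assert (Hodd : qpoch (q ^ 2) q (2 * n)
                 = qpoch q (q ^ 2) n * qpoch (q ^ 2) (q ^ 2) n * (1 - q * q ^ (2 * n)) / (1 - q)).
  { replace (q ^ 2) with (q * q) at 1 3 by ring.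
    rewrite qpoch_even_odd, <- qpoch_S, qpoch_shift; field; exact H1q. }
  replace (q ^ 4) with ((q ^ 2) ^ 2) by ring.
  rewrite <- qpoch_opp_mul, Hodd. unfold W. field; auto.
Qed.

Lemma lim_W : W --> qpoch_inf (q ^ 4) (q ^ 4) / qpoch_inf (q ^ 2) q.
Proof.
  assert (H1q : 1 - q <> 0) by (apply one_sub_neq0, hq).
  assert (HQ : qpoch_inf (q ^ 2) q <> 0)
    by (apply qpoch_inf_neq0; [apply Cmod_pow_lt1; [exact hq | lia] | exact hq]).
  assert (HX : (fun n => q ^ (2 * n)) --> 0) by (apply lim_Cpow_mul_0; [exact hq | lia]).
  apply (filterlim_ext _ _ (fun n => eq_sym (W_eq n))).
  replace (qpoch_inf (q ^ 4) (q ^ 4) / qpoch_inf (q ^ 2) q)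
    with ((1 - q + q * 0) * (1 - q * 0) / (1 - q)
          * (qpoch_inf (q ^ 4) (q ^ 4) / qpoch_inf (q ^ 2) q))
    by (field; auto).
  apply lim_Cmult;
    [apply lim_Cdiv; [apply lim_Cmult | apply filterlim_const | exact H1q] | apply lim_Cdiv].
  - apply lim_Cplus; [apply filterlim_const | apply lim_Cmult; [apply filterlim_const | exact HX]].
  - apply lim_Cminus; [apply filterlim_const | apply lim_Cmult; [apply filterlim_const | exact HX]].
  - apply qpoch_cvg, Cmod_pow_lt1; [exact hq | lia].
  - apply (lim_subseq (qpoch (q ^ 2) q)); [intros; lia | apply qpoch_cvg, hq].
  - exact HQ.
Qed.

Lemma second_identity :
  exists S : C,
    is_series (fun n => qpoch (- q ^ 2) (q ^ 2) n * q ^ (4 * n + 2) / qpoch q (q ^ 2) (n + 1)) S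
    /\ (1 + q ^ 3) * S = qpoch_inf (q ^ 4) (q ^ 4) / qpoch_inf (q ^ 2) q - 1.
Proof.
  assert (H3 : 1 + q ^ 3 <> 0) by (apply one_add_neq0, Cmod_pow_lt1; [exact hq | lia]).
  set (L := qpoch_inf (q ^ 4) (q ^ 4) / qpoch_inf (q ^ 2) q).
  exists ((L - W 0) / (1 + q ^ 3)). split.
  - apply (is_series_telescoping _ _ W); [exact H3 | exact W_step | exact lim_W].
  - rewrite W_0; field; exact H3.
Qed.

End SecondIdentity.

Theorem theorem2 (q : C) (hq : (Cmod q < 1)%R) :
  is_series
    (fun n : nat => q ^ (2 * n) * qpoch_inf (q ^ (4 * n + 4)) (q ^ 4)
                    * qpoch q q (2 * n + 1))
    (2 * (1 - q) * qpoch_inf (q ^ 4) (q ^ 4) / (1 + q ^ 3)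
     - qpoch_inf q q / (1 + q ^ 3))
  /\
  exists S : C,
    is_series
      (fun n : nat => qpoch (- q ^ 2) (q ^ 2) n * q ^ (4 * n + 2)
                      / qpoch q (q ^ 2) (n + 1)) S
    /\ (1 + q ^ 3) * S = qpoch_inf (q ^ 4) (q ^ 4) / qpoch_inf (q ^ 2) q - 1.
Proof. split; [apply first_identity | apply second_identity]; exact hq. Qed.
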